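(* Let $N > n$ and let $A$ be an $N \times n$ random matrix whose entries are independent random variables with absolutely continuous distributions. Then almost surely the following holds: for every $x \in S^{n-1}$ at which $\|Ax\|_1$ attains its minimum over $S^{n-1}$, the vector $Ax$ has exactly $N - n + 1$ nonzero coordinates.
   Context: $\|y\|_1 = \sum_j |y_j|$; $S^{n-1}$ is the Euclidean unit sphere in $\mathbb{R}^n$. *)

From HB Require Import structures.
From mathcomp Require Import all_boot all_order all_algebra.
From mathcomp Require Import all_classical all_reals all_analysis.
Set Implicit Arguments. Unset Strict Implicit. Unset Printing Implicit Defensive.
Import Order.TTheory GRing.Theory Num.Theory.
Local Open Scope classical_set_scope.
Local Open Scope ring_scope.

Definition mutually_independent d (Omega : measurableType d) (R : realType)
  (P : probability Omega R) (I : finType) (X : I -> {RV P >-> R}) : Prop :=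
  forall (J : {set I}) (B : I -> set R),
    (forall i, i \in J -> measurable (B i)) ->
    P (\big[setI/setT]_(i in J) (X i @^-1` B i)) =
    (\prod_(i in J) P (X i @^-1` B i))%E.

Definition abs_continuous_distribution d (Omega : measurableType d)
  (R : realType) (P : probability Omega R) (X : {RV P >-> R}) : Prop :=
  distribution P X `<< (@lebesgue_measure R).

Definition rmatrix d (Omega : measurableType d) (R : realType)
  (P : probability Omega R) (N n : nat) (X : 'I_N * 'I_n -> {RV P >-> R})
  (w : Omega) : 'M[R]_(N, n) := \matrix_(i, j) X (i, j) w.

Definition l1norm (R : realType) (N : nat) (y : 'cV[R]_N) : R :=
  \sum_(i < N) `|y i 0|.

Definition in_sphere (R : realType) (n : nat) (x : 'cV[R]_n) : Prop :=
  \sum_(j < n) x j 0 ^+ 2 = 1.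

Definition l1_sphere_minimizer (R : realType) (N n : nat) (A : 'M[R]_(N, n))
  (x : 'cV[R]_n) : Prop :=
  in_sphere x /\ forall y : 'cV[R]_n, in_sphere y -> l1norm (A *m x) <= l1norm (A *m y).

(* If every [n] rows of [A] are linearly independent, a minimizer [x] leaves
   fewer than [n] zeros in [A x] (otherwise an invertible [n x n] submatrix
   kills [x]) and at least [n - 1]: with fewer, some [v] orthogonal to [x] has
   [A v] vanishing on the zeros of [A x]; near [A x] the l1 norm is then linear
   along [A v], so [u = s x +- v] has [||A u||_1 <= s ||A x||_1] although
   [|u| > s]. For a random matrix all minors are almost surely nonzero: along
   its corner entry a minor is affine, with the complementary minor as slope,
   and a variable with a density independent of the other entries almost
   surely avoids any measurable function of them. *)

From HB Require Import structures.
From mathcomp Require Import all_boot all_order all_algebra.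
From mathcomp Require Import all_classical all_reals all_analysis measurable_realfun.
From mathcomp Require Import ring lra zify.
Import Order.TTheory GRing.Theory Num.Theory.
Local Open Scope ring_scope.
Set Implicit Arguments. Unset Strict Implicit. Unset Printing Implicit Defensive.

(** * Minimizers of the l1 norm on the sphere *)

Section L1Minimizers.
Variable R : realType.
Implicit Types (N n : nat).

Definition sqnorm n (u : 'cV[R]_n) : R := \sum_(j < n) u j 0 ^+ 2.

Lemma sqnorm_ge0 n (u : 'cV[R]_n) : 0 <= sqnorm u.
Proof. by apply: sumr_ge0 => j _; rewrite sqr_ge0. Qed.

Lemma sqnorm_eq0 n (u : 'cV[R]_n) : sqnorm u = 0 -> u = 0.
Proof.
move=> /psumr_eq0P u0; apply/matrixP => j k; rewrite (ord1 k) !mxE.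
by apply/eqP; rewrite -sqrf_eq0 u0 // => i _; apply: sqr_ge0.
Qed.

Lemma sqnorm_gt0 n (u : 'cV[R]_n) : u != 0 -> 0 < sqnorm u.
Proof.
by move=> u0; rewrite lt_def sqnorm_ge0 andbT; apply: contra u0 => /eqP/sqnorm_eq0 ->.
Qed.

Lemma l1norm_ge0 N (y : 'cV[R]_N) : 0 <= l1norm y.
Proof. exact: sumr_ge0. Qed.

Lemma l1normZ N (a : R) (y : 'cV[R]_N) : l1norm (a *: y) = `|a| * l1norm y.
Proof. by rewrite /l1norm mulr_sumr; apply: eq_bigr => i _; rewrite mxE normrM. Qed.

Lemma l1norm_eq0 N (y : 'cV[R]_N) : l1norm y = 0 -> y = 0.
Proof.
move=> /psumr_eq0P y0; apply/matrixP => i k; rewrite (ord1 k) !mxE.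
by apply/eqP; rewrite -normr_eq0 y0.
Qed.

Lemma l1_sphere_minimizer_le N n (A : 'M[R]_(N, n)) x u :
  l1_sphere_minimizer A x -> l1norm (A *m x) ^+ 2 * sqnorm u <= l1norm (A *m u) ^+ 2.
Proof.
move=> [_ xmin]; have [->|u0] := eqVneq u 0.
  by rewrite /sqnorm big1 ?mulr0 ?sqr_ge0 // => j _; rewrite mxE expr0n.
have u_gt0 := sqnorm_gt0 u0; set r := Num.sqrt (sqnorm u).
have r_gt0 : 0 < r by rewrite sqrtr_gt0.
have /xmin : in_sphere (r^-1 *: u).
  rewrite /in_sphere; under eq_bigr do rewrite mxE exprMn.
  by rewrite -mulr_sumr exprVn sqr_sqrtr ?(ltW u_gt0) // mulVf // gt_eqF.
rewrite -scalemxAr l1normZ ger0_norm ?invr_ge0 ?(ltW r_gt0) //.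
rewrite ler_pdivlMl // -(sqr_sqrtr (ltW u_gt0)) -/r => le_rm.
by rewrite mulrC -exprMn ler_sqr ?nnegrE ?mulr_ge0 ?l1norm_ge0 ?(ltW r_gt0).
Qed.

Lemma normrD_sg (a b : R) : `|b| <= `|a| -> `|a + b| = `|a| + Num.sg a * b.
Proof.
rewrite ler_norml => /andP[lo hi].
case: (ltrgtP a 0) => [a_lt0|a_gt0|a0].
- rewrite ltr0_sg // ltr0_norm // in lo hi *; rewrite ler0_norm; lra.
- rewrite gtr0_sg // gtr0_norm // in lo hi *; rewrite ger0_norm; lra.
- have b0 : b = 0 by rewrite a0 normr0 in lo hi; lra.
  by rewrite a0 b0 mulr0 !addr0 normr0.
Qed.

(* Along a direction [w] supported in the support of [y], the l1 norm is
   linear near [y], so one of the two senses does not increase it. *)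
Lemma l1norm_perturb N (y w : 'cV[R]_N) :
  (forall i, y i 0 = 0 -> w i 0 = 0) ->
  exists2 s : R, 0 < s &
    exists2 sig : R, sig ^+ 2 = 1 & l1norm (s *: y + sig *: w) <= s * l1norm y.
Proof.
move=> wy; set s := 1 + \sum_i `|w i 0| / `|y i 0|.
have s_gt0 : 0 < s by rewrite ltr_pwDl ?sumr_ge0.
have le_wy i : `|w i 0| <= `|s * y i 0|.
  rewrite normrM gtr0_norm //; have [yi0|yi0] := eqVneq (y i 0) 0.
    by rewrite wy // yi0 !normr0 mulr0.
  rewrite -ler_pdivrMr ?normr_gt0 // /s (bigD1 i) //= addrCA ler_wpDr //.
  by rewrite addr_ge0 ?sumr_ge0.
set c := \sum_i Num.sg (y i 0) * w i 0.
exists s => //; exists (if c <= 0 then 1 else -1).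
  by case: ifP; rewrite ?sqrrN expr1n.
have -> : l1norm (s *: y + (if c <= 0 then 1 else -1) *: w) =
          s * l1norm y + (if c <= 0 then 1 else -1) * c.
  rewrite /l1norm mulr_sumr mulr_sumr -big_split; apply: eq_bigr => i _.
  rewrite !mxE normrD_sg; last by rewrite normrM; case: ifP; rewrite ?normrN normr1 mul1r.
  by rewrite normrM sgrM gtr0_sg // mul1r gtr0_norm // mulrCA.
by case: ifPn => [c_le0|]; rewrite ?mul1r ?mulN1r -?ltNge; lra.
Qed.

Lemma exists_nonzero_mulmx_eq0 m n (C : 'M[R]_(m, n)) : (m < n)%N ->
  exists2 v : 'cV[R]_n, v != 0 & C *m v = 0.
Proof.
move=> lt_mn; have : kermx C^T != 0.
  rewrite -mxrank_eq0 mxrank_ker subn_eq0 -ltnNge.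
  exact: leq_ltn_trans (rank_leq_col C^T) lt_mn.
case/rowV0Pn => v /sub_kermxP vC0 v0; exists v^T; first by rewrite trmx_eq0.
by apply: trmx_inj; rewrite trmx_mul trmxK vC0 trmx0.
Qed.

Definition full_spark N n (A : 'M[R]_(N, n)) : Prop :=
  forall s : 'I_n -> 'I_N, injective s -> \det (rowsub s A) != 0.

Definition zeros N (y : 'cV[R]_N) := [set i : 'I_N | y i 0 == 0].

Lemma card_zeros_lt N n (A : 'M[R]_(N, n)) x :
  full_spark A -> x != 0 -> (#|zeros (A *m x)| < n)%N.
Proof.
move=> spark x0; rewrite ltnNge; apply: contra x0 => le_nZ; apply/eqP.
pose s (k : 'I_n) : 'I_N := enum_val (widen_ord le_nZ k).
have s_inj : injective s by move=> k1 k2 /enum_val_inj [] /val_inj.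
have sAx : rowsub s A *m x = 0.
  rewrite mul_rowsub_mx; apply/matrixP => k l; rewrite (ord1 l) [LHS]mxE [RHS]mxE.
  by have := enum_valP (widen_ord le_nZ k); rewrite inE => /eqP.
have sA_unit : rowsub s A \in unitmx by rewrite unitmxE unitfE spark.
by rewrite -(mulKmx sA_unit x) sAx mulmx0.
Qed.

Lemma card_zeros_ge N n (A : 'M[R]_(N, n)) x :
  (n <= N)%N -> l1_sphere_minimizer A x -> (n <= #|zeros (A *m x)|.+1)%N.
Proof.
move=> le_nN xmin; rewrite leqNgt; apply/negP => lt_Zn.
set y := A *m x; set Z := zeros y.
pose C := col_mx (rowsub (@enum_val _ (mem Z)) A) x^T.
have [v v0] : exists2 v : 'cV[R]_n, v != 0 & C *m v = 0.
  by apply: exists_nonzero_mulmx_eq0; rewrite addn1.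
rewrite mul_col_mx => /eqP; rewrite col_mx_eq0 => /andP[/eqP Av0 /eqP xv0].
set w := A *m v.
have wZ i : y i 0 = 0 -> w i 0 = 0.
  move=> yi0; have iZ : i \in Z by rewrite inE yi0.
  have /matrixP/(_ (enum_rank_in iZ i) 0) := Av0.
  by rewrite mul_rowsub_mx !mxE enum_rankK_in.
have x_perp_v : \sum_j x j 0 * v j 0 = 0.
  transitivity ((x^T *m v) 0 0); last by rewrite xv0 mxE.
  by rewrite mxE; apply: eq_bigr => j _; rewrite mxE.
have [s s_gt0 [sig sig2 le_l1]] := l1norm_perturb wZ.
set u := s *: x + sig *: v.
have Au : A *m u = s *: y + sig *: w by rewrite mulmxDr -!scalemxAr.
have sqnorm_u : sqnorm u = s ^+ 2 + sqnorm v.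
  rewrite /sqnorm; transitivity (\sum_j (s ^+ 2 * x j 0 ^+ 2
      + 2 * s * sig * (x j 0 * v j 0) + sig ^+ 2 * v j 0 ^+ 2)).
    by apply: eq_bigr => j _; rewrite !mxE; ring.
  have [x1 _] := xmin; rewrite /in_sphere in x1.
  by rewrite !big_split /= -!mulr_sumr x1 x_perp_v sig2 mulr0 mulr1 addr0 mul1r.
set m := l1norm y.
have m0 : m = 0.
  have := l1_sphere_minimizer_le u xmin; rewrite -/y -/m Au sqnorm_u.
  set L := l1norm _ in le_l1 *; have L_ge0 : 0 <= L := l1norm_ge0 _.
  have m_ge0 : 0 <= m := l1norm_ge0 y; have v_gt0 := sqnorm_gt0 v0.
  have le_L2 : L ^+ 2 <= (s * m) ^+ 2.
    by rewrite ler_sqr ?nnegrE ?mulr_ge0 ?(ltW s_gt0).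
  move=> le_mL; have mv_le0 : m ^+ 2 * sqnorm v <= 0 by nra.
  by apply/eqP; rewrite -sqrf_eq0 eq_le sqr_ge0 andbT -(pmulr_lle0 _ v_gt0).
have ZT : Z = [set: 'I_N].
  have y0 : y = 0 := l1norm_eq0 m0.
  by apply/setP => i; rewrite !inE y0 mxE eqxx.
by move: lt_Zn; rewrite -/y -/Z ZT cardsT card_ord; lia.
Qed.

Lemma l1_sphere_minimizer_support N n (A : 'M[R]_(N, n)) x :
  (n < N)%N -> full_spark A -> l1_sphere_minimizer A x ->
  #|[set i | (A *m x) i 0 != 0]| = (N - n + 1)%N.
Proof.
move=> lt_nN spark xmin.
have x0 : x != 0.
  apply/eqP => x0; move: (proj1 xmin); rewrite /in_sphere x0.
  by rewrite big1 => [/esym/eqP|j _]; rewrite ?oner_eq0 ?mxE ?expr0n.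
have lt_Zn := card_zeros_lt spark x0.
have le_nZ := card_zeros_ge (ltnW lt_nN) xmin.
have -> : [set i | (A *m x) i 0 != 0] = ~: zeros (A *m x).
  by apply/setP => i; rewrite !inE.
by have := cardsC (zeros (A *m x)); rewrite card_ord; lia.
Qed.

End L1Minimizers.

Local Open Scope classical_set_scope.
Local Open Scope ring_scope.

(** * An absolutely continuous variable avoids independent ones *)

(* Borel-Cantelli: sets of Lebesgue measure [2^-(k+1)] on which [mu >= e] would
   have a Lebesgue-null, hence [mu]-null, limsup of [mu]-measure at least [e]. *)
Lemma abs_continuous_eps_delta (R : realType)
    (mu : {finite_measure set R -> \bar R}) :
  mu `<< (@lebesgue_measure R) -> forall e : R, 0 < e ->
  exists2 dl : R, 0 < dl &
    forall A, measurable A -> (lebesgue_measure A < dl%:E)%E -> (mu A < e%:E)%E.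
Proof.
move=> /null_content_dominatesP mu_nu e e_gt0; apply: contrapT => no_dl.
have /choice[F /= HF] : forall k, exists A, [/\ measurable A,
    (lebesgue_measure A < (1 / (2 ^ k.+1)%:R)%:E)%E & (e%:E <= mu A)%E].
  move=> k; apply: contrapT => no_A; apply: no_dl.
  exists (1 / (2 ^ k.+1)%:R); first by rewrite divr_gt0 // ltr0n expn_gt0.
  move=> A mA lebA; rewrite ltNge; apply/negP => eA; apply: no_A; by exists A.
have mF k : measurable (F k) by have [] := HF k.
have mU k : measurable (\bigcup_(j >= k) F j) by apply: bigcup_measurable.
have mL : measurable (lim_sup_set F) by apply: bigcap_measurable.
have lebL : lebesgue_measure (lim_sup_set F) = 0%E.
  apply: lim_sup_set_cvg0 => //; apply: le_lt_trans (ltry 1%R).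
  have := @epsilon_trick R (fun=> 0%E) 1 xpredT (fun=> lexx 0%E) ler01.
  rewrite [X in (_ <= X + _)%E]eseries0 // add0e; apply: le_trans; apply: lee_nneseries => k.
    by move=> _ _; exact: measure_ge0.
  by rewrite add0e; have [_ /ltW] := HF k.
have : (e%:E <= mu (lim_sup_set F))%E.
  have muU0 : (mu (\bigcup_(k >= 0) F k) < +oo)%E.
    by rewrite -ge0_fin_numE // fin_num_measure //; exact: mU.
  rewrite -(cvg_lim _ (lim_sup_set_cvg mu F mF muU0)) //; apply: lime_ge.
    apply: ereal_nonincreasing_is_cvgn => a b ab.
    apply: le_measure; rewrite ?inE; [exact: mU|exact: mU|].
    by apply: bigcup_subset => k /=; exact: leq_trans.
  apply: nearW => k; have [_ _ eFk] := HF k; apply: le_trans eFk _.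
  apply: le_measure; rewrite ?inE; [exact: mF|exact: mU|by apply: bigcup_sup => /=].
by rewrite (mu_nu _ mL lebL) lee_fin leNgt e_gt0.
Qed.

Section Grid.
Variable R : realType.

Definition grid (M L : R) (k : nat) : set R := [set` `[k%:R * L - M, k.+1%:R * L - M[].

Variables (M L : R).
Hypothesis L_gt0 : 0 < L.

Lemma grid_measure k : (@lebesgue_measure R) (grid M L k) = L%:E.
Proof.
rewrite /grid lebesgue_measure_itv /=.
rewrite lte_fin ltrD2r ltr_pM2r // ltr_nat ltnSn -EFinB.
by congr (_%:E); rewrite -natr1; ring.
Qed.

Lemma grid_trivIset : trivIset setT (grid M L).
Proof.
move=> i j _ _ [x []]; rewrite /grid /= !in_itv /= => /andP[i1 i2] /andP[j1 j2].
have lt_ML p q : (p < q)%N -> p.+1%:R * L - M <= q%:R * L - M.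
  by move=> pq; rewrite lerD2r ler_wpM2r ?ler_nat // ltW.
by case: (ltngtP i j) => // /lt_ML ?; exfalso; lra.
Qed.

Lemma grid_cover (x : R) : -M <= x < M ->
  exists2 k, (k < (Num.truncn (2 * M / L)).+1)%N & grid M L k x.
Proof.
move=> /andP[x1 x2]; have xM_ge0 : 0 <= (x + M) / L.
  by apply: divr_ge0; [lra|exact: ltW].
exists (Num.truncn ((x + M) / L)).
  rewrite ltnS truncn_le_nat (le_lt_trans _ (truncnS_gt _)) //.
  by rewrite ler_pM2r ?invr_gt0 //; lra.
have /andP[k1 k2] := truncn_itv xM_ge0.
rewrite /grid /= in_itv /=; rewrite ler_pdivlMr // in k1; rewrite ltr_pdivrMr // in k2.
by apply/andP; split; lra.
Qed.

End Grid.

Section IndependentNeq.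
Variables (R : realType) (d : measure_display) (Omega : measurableType d).
Variables (P : probability Omega R) (X : {RV P >-> R}) (Z : Omega -> R).
Hypothesis mZ : measurable_fun setT Z.
Hypothesis indepXZ : forall A B, measurable A -> measurable B ->
  P (X @^-1` A `&` Z @^-1` B) = (P (X @^-1` A) * P (Z @^-1` B))%E.

Let mZp B : measurable B -> measurable (Z @^-1` B).
Proof. by move=> mB; rewrite -[_ @^-1` _]setTI; apply: mZ. Qed.

Lemma indep_diagonal_le (e : R) K (J : nat -> set R) :
  (forall k, measurable (J k)) -> trivIset setT J ->
  (forall k, (P (X @^-1` J k) <= e%:E)%E) ->
  (P (\big[setU/set0]_(k < K) (X @^-1` J k `&` Z @^-1` J k)) <= e%:E)%E.
Proof.
move=> mJ tJ XJ_le; have e_ge0 : 0 <= e.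
  by rewrite -lee_fin; apply: le_trans (XJ_le 0%N); exact: measure_ge0.
have mXJ k : measurable (X @^-1` J k) := measurable_funPTI X (mJ k).
have tZJ : trivIset setT (fun k => Z @^-1` J k).
  by move=> i j _ _ [w [/= Ji Jj]]; apply: tJ => //; exists (Z w).
have tXZJ : trivIset setT (fun k => X @^-1` J k `&` Z @^-1` J k).
  by move=> i j _ _ [w [[_ Ji] [_ Jj]]]; apply: tZJ => //; exists w.
rewrite (measure_bigsetU_ord P xpredT); last 2 first.
- by move=> k; apply: measurableI => //; apply: mZp.
- by move=> i j _ _ /(tXZJ i j I I) /val_inj.
apply: (@le_trans _ _ (\sum_(k < K) (e%:E * P (Z @^-1` J k)))%E).
  apply: lee_sum => k _.
  apply: (@le_trans _ _ (P (X @^-1` J k) * P (Z @^-1` J k))%E).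
    by rewrite -indepXZ.
  by apply: lee_wpmul2r => //; exact: measure_ge0.
rewrite -ge0_sume_distrr; last by move=> k _; apply: measure_ge0.
rewrite -(measure_bigsetU_ord P xpredT (F := fun k : 'I_K => Z @^-1` J k)); last 2 first.
- by move=> k; apply: mZp.
- by move=> i j _ _ /(tZJ i j I I) /val_inj.
rewrite -[leRHS]mule1 lee_wpmul2l ?lee_fin //.
by apply: probability_le1; apply: bigsetU_measurable => k _; apply: mZp.
Qed.

Hypothesis X_ac : abs_continuous_distribution X.

(* On [|X| < M] the event [X = Z] is covered by the [X, Z]-diagonal of a grid
   of mesh so small that [X] charges each cell less than [e]. *)
Lemma indep_neq_ae : {ae P, forall w, X w != Z w}.
Proof.
pose E (M : nat) := [set w | X w = Z w] `&` X @^-1` `]-(M.+1%:R), M.+1%:R[.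
suff nE M : P.-negligible (E M).
  rewrite nearE; apply: negligibleS (negligible_bigcup nE) => w /= /negP/negPn/eqP XZ.
  exists (Num.truncn `|X w|) => //; split => //=.
  by rewrite in_itv /= -ltr_norml truncnS_gt.
set Mr : R := M.+1%:R.
have mE : measurable (E M).
  apply: measurableI; last exact: measurable_funPTI.
  have -> : [set w | X w = Z w] = (X \- Z) @^-1` [set 0].
    by apply/seteqP; split => w /=; [move=> ->; rewrite subrr|move/subr0_eq].
  by rewrite -[_ @^-1` _]setTI; apply: measurable_funB.
exists (E M); split => //; apply/eqP; rewrite eq_le measure_ge0 andbT.
apply/lee_addgt0Pr => e e_gt0; rewrite add0e.
have [dl dl_gt0 small_X] := abs_continuous_eps_delta X_ac e_gt0.
set L := dl / 2; have L_gt0 : 0 < L by rewrite divr_gt0.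
have mJ k : measurable (grid Mr L k) by apply: measurable_itv.
have XJ k : (P (X @^-1` grid Mr L k) <= e%:E)%E.
  apply/ltW/(small_X _ (mJ k)).
  by rewrite grid_measure // lte_fin /L ltr_pdivrMr // ltr_pMr // ltr1n.
have := indep_diagonal_le (Num.truncn (2 * Mr / L)).+1 mJ
  (@grid_trivIset _ Mr L L_gt0) XJ.
apply: le_trans; apply: le_measure; rewrite ?inE.
- exact: mE.
- by apply: bigsetU_measurable => k _; apply: measurableI;
    [exact: measurable_funPTI|apply: mZp].
move=> w [/= XZ]; rewrite in_itv /= => /andP[X1 X2].
have [|k k_lt Jk] := @grid_cover _ Mr L L_gt0 (X w); first by rewrite (ltW X1) X2.
rewrite -(bigcup_mkord _ (fun k => X @^-1` grid Mr L k `&` Z @^-1` grid Mr L k)).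
by exists k => //; split => //; rewrite /= -XZ.
Qed.

End IndependentNeq.

(** * One entry of an independent family against the others *)

Lemma bigsetI_mem (T : Type) (I : finType) (J : {set I}) (F : I -> set T) x :
  (\big[setI/setT]_(i in J) F i) x <-> (forall i, i \in J -> F i x).
Proof.
rewrite -bigcap_seq_cond; split => [h i iJ|h i /andP[_ iJ]]; last exact: h.
by apply: h; rewrite /= mem_index_enum iJ.
Qed.

Section Boxes.
Variables (R : realType) (m : nat).

Definition box (B : 'I_m -> set R) : set (m.-tuple R) :=
  [set t | forall k, B k (tnth t k)].

Definition boxes : set (set (m.-tuple R)) :=
  [set S | exists2 B, (forall k, measurable (B k)) & S = box B].

Lemma tuple_measurable_boxes : @measurable _ (m.-tuple R) = <<s boxes >>.
Proof.
apply/seteqP; split.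
- apply: smallest_sub; first exact: smallest_sigma_algebra.
  elim/big_ind: _ => //; first by move=> S1 S2 h1 h2 S [/h1|/h2].
  move=> i _ S [A mA <-]; apply: sub_sigma_algebra.
  exists (fun k => if k == i then A else setT); first by move=> k; case: ifP.
  apply/seteqP; split => t /=; first by move=> [_ At] k; case: eqP => [->|].
  by move/(_ i); rewrite eqxx.
- apply: smallest_sub; first exact: sigma_algebra_measurable.
  move=> S [B mB ->].
  have -> : box B = \big[setI/setT]_(k in [set: 'I_m]%SET) ((tnth (T:=R))^~ k @^-1` B k).
    apply/seteqP; split => t; rewrite bigsetI_mem => Bt k; last exact: Bt.
    by move=> _; apply: Bt.
  apply: bigsetI_measurable => k _.
  by rewrite -[_ @^-1` _]setTI; apply: measurable_tnth.
Qed.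

Lemma boxes_setI : setI_closed boxes.
Proof.
move=> _ _ [B1 mB1 ->] [B2 mB2 ->]; exists (fun k => B1 k `&` B2 k).
  by move=> k; apply: measurableI.
by apply/seteqP; split => t /=; [move=> [h1 h2] k; split|move=> h; split => k; case: (h k)].
Qed.

End Boxes.

Section MaskedTuple.
Variables (R : realType) (d : measure_display) (Omega : measurableType d).
Variables (P : probability Omega R) (I : finType) (X : I -> {RV P >-> R}) (p0 : I).

Definition masked (q : I) (w : Omega) : R := if q == p0 then 0 else X q w.

Definition masked_tuple (w : Omega) : #|I|.-tuple R :=
  [tuple masked (enum_val k) w | k < #|I|].

Lemma measurable_masked_tuple : measurable_fun setT masked_tuple.
Proof.
apply/measurable_fun_tnthP => k /=; rewrite /comp.
under eq_fun do rewrite tnth_mktuple.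
rewrite /masked; case: (enum_val k == p0); first exact: measurable_cst.
exact: measurable_funPT.
Qed.

Lemma measurable_preimage_masked_tuple S :
  measurable S -> measurable (masked_tuple @^-1` S).
Proof. by move=> mS; rewrite -[_ @^-1` _]setTI; apply: measurable_masked_tuple. Qed.

Hypothesis indepX : mutually_independent X.

Lemma indep_masked_box A B : measurable A -> (forall k, measurable (B k)) ->
  P (X p0 @^-1` A `&` masked_tuple @^-1` box B) =
  (P (X p0 @^-1` A) * P (masked_tuple @^-1` box B))%E.
Proof.
move=> mA mB; pose C q := B (enum_rank q).
have -> : masked_tuple @^-1` box B = [set w | forall q, C q (masked q w)].
  apply/seteqP; split => w /= Bw.
    by move=> q; have := Bw (enum_rank q); rewrite tnth_mktuple enum_rankK.
  by move=> k; rewrite tnth_mktuple /C -{1}(enum_valK k); apply: Bw.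
have [Cp0|nCp0] := pselect (C p0 0); last first.
  have -> : [set w | forall q, C q (masked q w)] = set0.
    by apply/seteqP; split => w // /(_ p0); rewrite /masked eqxx.
  by rewrite setI0 measure0 mule0.
set J := [set q | q != p0]%SET.
have maskedE : [set w | forall q, C q (masked q w)] =
    \big[setI/setT]_(q in J) (X q @^-1` C q).
  apply/seteqP; split => w /=; rewrite bigsetI_mem => h q.
    by rewrite inE => /negbTE qp; have := h q; rewrite /masked qp.
  by rewrite /masked; case: eqP => [->//|/eqP qp]; apply: h; rewrite inE.
rewrite maskedE; pose D q := if q == p0 then A else C q.
have -> : X p0 @^-1` A `&` \big[setI/setT]_(q in J) (X q @^-1` C q) =
    \big[setI/setT]_(q in [set: I]%SET) (X q @^-1` D q).
  apply/seteqP; split => w /=.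
    move=> [XA /bigsetI_mem XC]; apply/bigsetI_mem => q _; rewrite /D.
    by case: eqP => [->//|/eqP qp]; apply: XC; rewrite inE.
  move/bigsetI_mem => XD; split; first by have := XD p0; rewrite /D eqxx inE; apply.
  apply/bigsetI_mem => q; rewrite inE => /negbTE qp.
  by have := XD q; rewrite /D qp inE; apply.
rewrite (@indepX [set: I]%SET D); last first.
  by move=> q _; rewrite /D; case: ifP => _; [exact: mA|exact: mB].
rewrite (@indepX J C) => [|q _]; last exact: mB.
rewrite (bigD1 p0) ?inE //= {1}/D eqxx; congr (_ * _)%E.
apply: eq_big => q; first by rewrite !inE.
by move=> /andP[_ qp]; rewrite /D (negbTE qp).
Qed.

Lemma indep_masked_tuple A S : measurable A -> measurable S ->
  P (X p0 @^-1` A `&` masked_tuple @^-1` S) =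
  (P (X p0 @^-1` A) * P (masked_tuple @^-1` S))%E.
Proof.
move=> mA mS; have mXA := measurable_funPTI (X p0) mA.
have mY := measurable_preimage_masked_tuple.
have finP U : measurable U -> P U = (fine (P U))%:E.
  by move=> mU; rewrite fineK // fin_num_measure.
apply: (@dynkin_induction _ _ (@boxes R #|I|)
  (fun S => P (X p0 @^-1` A `&` masked_tuple @^-1` S) =
            (P (X p0 @^-1` A) * P (masked_tuple @^-1` S))%E));
  last by rewrite -tuple_measurable_boxes.
- exact: tuple_measurable_boxes.
- exact: boxes_setI.
- by rewrite preimage_setT setIT probability_setT mule1.
- by move=> _ [B mB ->]; apply: indep_masked_box.
- move=> S' mS' IH.
  rewrite -preimage_setC -setDE measureD //; last 2 first.
  + exact: mY.
  + by rewrite -ge0_fin_numE // fin_num_measure.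
  transitivity (P (X p0 @^-1` A) - P (X p0 @^-1` A) * P (masked_tuple @^-1` S'))%E.
    by congr (_ - _)%E.
  rewrite (probability_setC P (mY _ mS')) (finP _ mXA) (finP _ (mY _ mS')).
  by rewrite -EFinM -!EFinB -EFinM; congr (_%:E); ring.
- move=> F mF tF IH.
  have tYF : trivIset setT (fun i => masked_tuple @^-1` F i).
    by move=> i j _ _ [w [a b]]; apply: tF => //; exists (masked_tuple w).
  rewrite preimage_bigcup setI_bigcupr !measure_bigcup //; last 3 first.
  + by move=> i _; apply: mY.
  + by move=> i _; apply: measurableI => //; apply: mY.
  + exact: trivIset_setIl.
  transitivity (\sum_(i <oo | i \in setT)
      (P (X p0 @^-1` A) * P (masked_tuple @^-1` F i)))%E.
    by apply: eq_eseriesr => i _; apply: IH.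
  by rewrite (finP _ mXA) nneseriesZl.
Qed.

Lemma masked_coordinate_neq_ae (h : #|I|.-tuple R -> R) :
  measurable_fun setT h -> abs_continuous_distribution (X p0) ->
  {ae P, forall w, X p0 w != h (masked_tuple w)}.
Proof.
move=> mh X_ac; apply: (indep_neq_ae (Z := h \o masked_tuple)) => //.
  exact: measurableT_comp mh measurable_masked_tuple.
move=> A B mA mB; have mhB : measurable (h @^-1` B).
  by rewrite -[_ @^-1` _]setTI; apply: mh.
exact: indep_masked_tuple mA mhB.
Qed.

End MaskedTuple.

(** * Minors of the random matrix *)

Lemma det_split_corner (T : comNzRingType) k (A B : 'M[T]_k.+1) :
  (forall i j, (i != 0) || (j != 0) -> A i j = B i j) -> B 0 0 = 0 ->
  \det A = A 0 0 * cofactor B 0 0 + \det B.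
Proof.
move=> AB B00; have cofAB j : cofactor A 0 j = cofactor B 0 j.
  rewrite /cofactor; congr (_ * \det _); apply/matrixP => a b; rewrite !mxE.
  by apply: AB; rewrite eq_sym neq_lift.
rewrite (expand_det_row A 0) (expand_det_row B 0) !big_ord_recl B00 mul0r add0r.
congr (_ + _); first by rewrite cofAB.
by apply: eq_bigr => j _; rewrite cofAB AB // eq_sym neq_lift orbT.
Qed.

Lemma measurable_invr (R : realType) : measurable_fun setT (@GRing.inv R).
Proof.
have -> : [set: R] = ~` [set 0] `|` [set 0].
  by apply/seteqP; split => x // _; case: (eqVneq x 0) => [->|/eqP]; [right|left].
apply/measurable_funU => //; first exact: measurableC.
split; last exact: measurable_fun_set1.
apply: open_continuous_measurable_fun.
  by apply: closed_openC; apply: compact_closed; [exact: Rhausdorff|exact: compact_set1].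
by move=> x; rewrite inE => /eqP x0; exact: inv_continuous.
Qed.

Lemma measurable_det (R : realType) d (T : measurableType d) k (M : T -> 'M[R]_k) :
  (forall a b, measurable_fun setT (fun t => M t a b)) ->
  measurable_fun setT (fun t => \det (M t)).
Proof.
move=> mM; apply: measurable_sum => s; apply: measurable_funM => //.
by apply: measurable_prod => i _; apply: mM.
Qed.

Section RandomMinors.
Variables (R : realType) (d : measure_display) (Omega : measurableType d).
Variables (P : probability Omega R) (N n : nat) (X : 'I_N * 'I_n -> {RV P >-> R}).
Hypothesis indepX : mutually_independent X.
Hypothesis X_ac : forall ij, abs_continuous_distribution (X ij).

(* Expanding along the corner entry [X p0], the minor is [X p0 * c + r] with
   [c] the complementary minor and [c], [r] functions of the other entries:
   it vanishes only if [c] does or if [X p0 = - r / c]. *)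
Lemma det_mxsub_neq0_ae k (s : 'I_k -> 'I_N) (c : 'I_k -> 'I_n) :
  injective s -> injective c ->
  {ae P, forall w, \det (mxsub s c (rmatrix X w)) != 0}.
Proof.
elim: k s c => [|k IH] s c s_inj c_inj.
  by apply: aeW => w; rewrite det_mx00 oner_neq0.
set p0 := (s 0, c 0); set Y := masked_tuple X p0.
pose Mt (t : #|{: 'I_N * 'I_n}|.-tuple R) : 'M[R]_k.+1 :=
  \matrix_(a, b) tnth t (enum_rank (s a, c b)).
have Y_off w a b : (a != 0) || (b != 0) ->
    tnth (Y w) (enum_rank (s a, c b)) = X (s a, c b) w.
  move=> ab; rewrite tnth_mktuple enum_rankK /masked.
  by case: eqP => // -[/s_inj a0 /c_inj b0]; move: ab; rewrite a0 b0 eqxx.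
have detE w : \det (mxsub s c (rmatrix X w)) =
    X p0 w * cofactor (Mt (Y w)) 0 0 + \det (Mt (Y w)).
  rewrite (@det_split_corner _ _ _ (Mt (Y w))) => [|i j ij|].
  - by rewrite !mxE.
  - by rewrite !mxE Y_off.
  - by rewrite mxE tnth_mktuple enum_rankK /masked eqxx.
have cofE w : cofactor (Mt (Y w)) 0 0 =
    \det (mxsub (s \o lift 0) (c \o lift 0) (rmatrix X w)).
  rewrite /cofactor addn0 expr0 mul1r; congr (\det _); apply/matrixP => a b.
  by rewrite !mxE Y_off // neq_lift.
pose h t := - \det (Mt t) / cofactor (Mt t) 0 0.
have mMt a b : measurable_fun setT (fun t => Mt t a b).
  by under eq_fun do rewrite mxE; exact: measurable_tnth.
have mh : measurable_fun setT h.
  apply: measurable_funM; first by apply: measurable_funN; apply: measurable_det.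
  apply: measurableT_comp; first exact: measurable_invr.
  apply: measurable_funM => //.
  apply: measurable_det => a b.
  have -> : (fun t => row' 0 (col' 0 (Mt t)) a b) =
            (fun t => Mt t (lift 0 a) (lift 0 b)) by apply/funext => t; rewrite !mxE.
  exact: mMt.
have := IH _ _ (inj_comp s_inj (@lift_inj _ 0)) (inj_comp c_inj (@lift_inj _ 0)).
apply: filterS2 (masked_coordinate_neq_ae indepX mh (X_ac p0)) => w Xh.
rewrite -cofE detE => cof0; apply: contra Xh; rewrite addr_eq0 => /eqP XcofE.
by rewrite /h -XcofE mulfK.
Qed.

Lemma full_spark_rmatrix_ae : {ae P, forall w, full_spark (rmatrix X w)}.
Proof.
have : {ae P, forall w, forall s : {ffun 'I_n -> 'I_N},
    injective s -> \det (rowsub s (rmatrix X w)) != 0}.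
  apply: filter_forall => s.
  have [/injectiveP s_inj|/injectiveP s_ninj] := boolP (injectiveb s).
    by apply: filterS (det_mxsub_neq0_ae s_inj (@inj_id _)) => w.
  by apply: aeW => w /s_ninj.
apply: filterS => w spark s s_inj.
have -> : rowsub s (rmatrix X w) = rowsub [ffun i => s i] (rmatrix X w).
  by apply/matrixP => i j; rewrite !mxE ffunE.
by apply: spark => i j; rewrite !ffunE => /s_inj.
Qed.

End RandomMinors.

Local Close Scope classical_set_scope.

Theorem lemma8p3 (R : realType) (d : measure_display) (Omega : measurableType d)
  (P : probability Omega R) (N n : nat) (X : 'I_N * 'I_n -> {RV P >-> R}) :
  (n < N)%N ->
  mutually_independent X ->
  (forall ij, abs_continuous_distribution (X ij)) ->
  {ae P, forall w, forall x : 'cV[R]_n,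
     l1_sphere_minimizer (rmatrix X w) x ->
     #|[set i : 'I_N | (rmatrix X w *m x) i 0 != 0]| = (N - n + 1)%N}.
Proof.
move=> lt_nN indepX X_ac; apply: filterS (full_spark_rmatrix_ae indepX X_ac).
by move=> w spark x; apply: l1_sphere_minimizer_support.
Qed.
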